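(* Let $T$ be the regular rooted tree of valence $p\geq 2$ with the embedded wire diffeology $\mathcal{D}_T$, and equip $\operatorname{Aut}T$ with the functional diffeology. Let $P:\mathbb{R}\to\operatorname{Aut}T$ be a plot of this diffeology. Then for all $m,n\in\mathbb{N}$, the automorphisms $P(n)$ and $P(n+1)$ belong to the same coset of $\operatorname{Stab}(n)$, and the automorphisms $P(-m)$ and $P(-m-1)$ belong to the same coset of $\operatorname{Stab}(m)$.
   Context: Fix a finite alphabet $A$ with $|A|=p\geq 2$. The vertices of $T$ are the finite words over $A$ (the root is the empty word); the length $|u|$ of a word is its level; two vertices are joined by an edge iff they have the form $a_1\dots a_n$ and $a_1\dots a_na_{n+1}$. As a topological space, $T$ is the 1-dimensional CW complex obtained by realizing each edge as a copy of $[0,1]$, with its usual topology. $\operatorname{Aut}T$ is the group of bijections of the vertex set fixing the root and preserving adjacency; each is regarded as a homeomorphism of the geometric realization mapping each edge affinely onto its image edge. $\operatorname{Stab}(n)$ is the (normal) subgroup of $\operatorname{Aut}T$ consisting of automorphisms fixing every vertex of level $n$. A diffeology on a set $X$ is a collection of maps $U\to X$ (''plots''), $U$ ranging over open subsets of all $\mathbb{R}^n$, containing all constant maps, closed under precomposition with smooth maps, and satisfying the sheaf condition. The diffeology generated by a set $\mathcal{A}$ of maps is the smallest diffeology containing $\mathcal{A}$. The embedded wire diffeology $\mathcal{D}_T$ is the diffeology on $T$ generated by all maps $\gamma:\mathbb{R}\to T$ that are injective, continuous, and homeomorphisms onto their images. A map between diffeological spaces is smooth if it sends plots to plots. Every element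 of $\operatorname{Aut}T$ is smooth $T\to T$. The product diffeology on $X\times Y$ is the coarsest diffeology making both projections smooth. The functional diffeology on $C^\infty(T,T)$ is the coarsest diffeology such that the evaluation map $C^\infty(T,T)\times T\to T$, $(f,x)\mapsto f(x)$, is smooth; $\operatorname{Aut}T\subseteq C^\infty(T,T)$ carries the induced subset diffeology. Equivalently, $P:U\to\operatorname{Aut}T$ is a plot iff $U\times T\to T$, $(u,x)\mapsto P(u)(x)$, is smooth. *)

From HB Require Import structures.
From mathcomp Require Import all_boot all_order all_algebra.
From mathcomp Require Import all_classical all_reals all_analysis.
Set Implicit Arguments. Unset Strict Implicit. Unset Printing Implicit Defensive.
Import Order.TTheory GRing.Theory Num.Theory.
Import numFieldNormedType.Exports.
Local Open Scope classical_set_scope.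
Local Open Scope ring_scope.

(* The tree T: vertices are words over a finite alphabet A.            *)
Section Tree.
Variable A : finType.

Definition adj (u v : seq A) : Prop :=
  (exists a, v = rcons u a) \/ (exists a, u = rcons v a).

Definition is_aut (g : seq A -> seq A) : Prop :=
  [/\ bijective g, g [::] = [::] & forall u v, adj u v <-> adj (g u) (g v)].

Definition AutT := {g : seq A -> seq A | is_aut g}.

Definition in_Stab (n : nat) (s : AutT) : Prop :=
  forall v : seq A, size v = n -> sval s v = v.

(* h lies in the coset g Stab(n) (= Stab(n) g, Stab(n) being normal) *)
Definition same_coset (n : nat) (g h : AutT) : Prop :=
  exists s : AutT, in_Stab n s /\ forall v, sval h v = sval g (sval s v).

End Tree.

(* A point is ([::], 0) (the root) or (w, t) with w nonempty and       *)
(* 0 < t <= 1: the point of the edge from the parent of w to w at      *)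
(* distance t from the parent (t = 1 is the vertex w).                 *)
Section Realization.
Variable R : realType.
Variable A : finType.

Definition point_ok (x : seq A * R) : Prop :=
  (x.1 = [::] /\ x.2 = 0) \/ (x.1 <> [::] /\ 0 < x.2 <= 1).

Definition Tpt := {x : seq A * R | point_ok x}.

Definition vtx_pt (u : seq A) (x : Tpt) : Prop :=
  if u is [::] then sval x = ([::], 0) else sval x = (u, 1).

(* x = phi_w(s), phi_w : [0,1] -> T the affine characteristic map of
   the closed edge from the parent of w to w (w nonempty, 0 <= s <= 1) *)
Definition edge_pt (w : seq A) (s : R) (x : Tpt) : Prop :=
  (s = 0 /\ vtx_pt (take (size w).-1 w) x) \/ (0 < s /\ sval x = (w, s)).

(* CW (weak) topology: U open iff its preimage under every closed-edge
   characteristic map is open in [0,1] *)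
Definition openT (U : set Tpt) : Prop :=
  forall w : seq A, w <> [::] -> forall s : R, 0 <= s <= 1 ->
  forall x, edge_pt w s x -> U x ->
  exists2 e : R, 0 < e & forall s' : R, 0 <= s' <= 1 -> `|s' - s| < e ->
     forall x', edge_pt w s' x' -> U x'.

Definition wire (gam : R -> Tpt) : Prop :=
  [/\ injective gam,
      (forall U, openT U -> open (gam @^-1` U))
    & (forall V : set R, open V ->
         exists W, openT W /\ gam @` V = W `&` range gam)].

(* action of an automorphism on the realization (affine on edges) *)
Lemma act_ok (g : AutT A) (x : Tpt) : point_ok (sval g (sval x).1, (sval x).2).
Proof.
move: g x => [f [[f' fK _] f0 _]] [[w t] hx] /=.
case: hx => [[/= hw ht]|[/= hw ht]].
  by left; rewrite /= hw f0 ht.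
right; split => // hgw; apply: hw.
by move: (fK w); rewrite /= in hgw; rewrite hgw -{1}f0 fK => <-.
Qed.

Definition act (g : AutT A) (x : Tpt) : Tpt := exist _ _ (act_ok g x).

End Realization.

Section Smooth.
Variable R : realType.

Fixpoint iderive (m : nat) (W : normedModType R) (vs : seq 'rV[R]_m)
  (f : 'rV[R]_m -> W) : 'rV[R]_m -> W :=
  match vs with
  | [::] => f
  | v :: vs' => fun x => 'D_v (iderive vs' f) x
  end.

Definition smooth_on (m : nat) (W : normedModType R) (V : set 'rV[R]_m)
  (f : 'rV[R]_m -> W) : Prop :=
  forall (vs : seq 'rV[R]_m) (x : 'rV[R]_m), V x ->
    {for x, continuous (iderive vs f)} /\
    forall v, derivable (iderive vs f) x v.

End Smooth.

(* Diffeologies. A parametrization U -> X (U open in R^n) is given by  *)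
(* a total map 'rV_n -> X, only its values on U being relevant.        *)
Section Diffeology.
Variable R : realType.
Variable X : Type.

Definition plotpred := forall n : nat, set 'rV[R]_n -> ('rV[R]_n -> X) -> Prop.

Record is_diffeology (D : plotpred) : Prop := {
  diff_ext : forall n (U : set 'rV[R]_n) (f g : 'rV[R]_n -> X), open U ->
    (forall x, U x -> f x = g x) -> D n U f -> D n U g;
  diff_const : forall n (U : set 'rV[R]_n) (c : X), open U -> D n U (fun _ => c);
  diff_comp : forall n m (U : set 'rV[R]_n) (V : set 'rV[R]_m)
    (f : 'rV[R]_n -> X) (h : 'rV[R]_m -> 'rV[R]_n),
    open U -> open V -> D n U f -> smooth_on V h -> h @` V `<=` U ->
    D m V (f \o h);
  diff_sheaf : forall n (U : set 'rV[R]_n) (f : 'rV[R]_n -> X), open U ->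
    (forall x, U x -> exists W, [/\ open W, W x, W `<=` U & D n W f]) ->
    D n U f }.

Definition gen_plot (G : plotpred) : plotpred :=
  fun n U f => forall D, is_diffeology D ->
    (forall k V g, G k V g -> D k V g) -> D n U f.

End Diffeology.

Section WireDiffeology.
Variable R : realType.
Variable A : finType.

Inductive wire_gen : forall n : nat, set 'rV[R]_n -> ('rV[R]_n -> Tpt R A) -> Prop :=
  | WireGen (gam : R -> Tpt R A) : wire gam ->
      wire_gen (n := 1) setT (fun x : 'rV[R]_1 => gam (x ord0 ord0)).

Definition DT_plot : plotpred R (Tpt R A) := gen_plot wire_gen.

(* functional diffeology on Aut T: P : U -> Aut T (U open in R^m) is a
   plot iff (u, x) |-> P(u)(x), U x T -> T, is smooth for the product
   diffeology (plots of U x T = pairs of a plot of U, i.e. a smooth map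
   into U, and a plot of T) *)
Definition Aut_plot (m : nat) (U : set 'rV[R]_m) (P : 'rV[R]_m -> AutT A) : Prop :=
  forall n (V : set 'rV[R]_n) (Q1 : 'rV[R]_n -> 'rV[R]_m) (Q2 : 'rV[R]_n -> Tpt R A),
    open V -> smooth_on V Q1 -> Q1 @` V `<=` U -> DT_plot V Q2 ->
    DT_plot V (fun v => act (P (Q1 v)) (Q2 v)).

End WireDiffeology.

(** A plot [P] of the functional diffeology moves each vertex [v] along a
    continuous path [t |-> P(t)(v)] of the CW realization, because every plot
    of the wire diffeology is continuous.  Automorphisms preserve levels and
    the subtree above any vertex is open, so this path is locally constant,
    hence constant on the connected line.  Thus all [P(t)] agree on every
    level, which is more than the coset statement. *)
From Pilot Require Import Defs.
From HB Require Import structures.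
From mathcomp Require Import all_boot all_order all_algebra.
From mathcomp Require Import all_classical all_reals all_analysis.
From mathcomp Require Import zify.
Set Implicit Arguments. Unset Strict Implicit. Unset Printing Implicit Defensive.
Import Order.TTheory GRing.Theory Num.Theory.
Import numFieldNormedType.Exports.
Local Open Scope classical_set_scope.
Local Open Scope ring_scope.

Section Automorphisms.
Variable A : finType.

Lemma adj_sym (u v : seq A) : adj u v -> adj v u.
Proof. by case; [right|left]. Qed.

Lemma size_adj (u v : seq A) :
  adj u v -> size v = (size u).+1 \/ size u = (size v).+1.
Proof. by case=> -[a ->]; [left|right]; rewrite size_rcons. Qed.

Lemma adj_parent_uniq (u v v' : seq A) : adj u v -> adj u v' ->
  size u = (size v).+1 -> size v' = size v -> v = v'.
Proof.
have parent w : adj u w -> size u = (size w).+1 -> exists a, u = rcons w a.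
  by case=> -[a ->]; [rewrite size_rcons; lia|exists a].
move=> uv uv' su sv'; have [a ua] := parent _ uv su.
have [b ub] := parent _ uv' (etrans su (congr1 S (esym sv'))).
by move: ua; rewrite ub => /rcons_inj[].
Qed.

Variable g : seq A -> seq A.
Hypothesis g_aut : is_aut g.

Lemma size_aut w : size (g w) = size w.
Proof.
have [[g' gK _] g0 g_adj] := g_aut.
have adj_rcons u a : adj (g u) (g (rcons u a)).
  by apply/(g_adj _ _).1; left; exists a.
(* If [g] sent a grandchild back to the level of the grandparent, both images
   would be the parent of the image of the child, contradicting injectivity. *)
suff : size (g w) = size w /\ forall a, size (g (rcons w a)) = (size w).+1.
  by case.
elim/last_ind: w => [|w a [sw IH]].
  rewrite g0; split=> // a.
  by have := size_adj (adj_rcons [::] a); rewrite g0 /=; lia.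
rewrite size_rcons IH; split=> // b; have := size_adj (adj_rcons (rcons w a) b).
rewrite IH => -[//|[sb]]; exfalso.
have := adj_parent_uniq (adj_sym (adj_rcons w a)) (adj_rcons _ b).
rewrite IH sw -sb => /(_ erefl erefl)/(congr1 g').
by rewrite !gK => /(congr1 size); rewrite !size_rcons; lia.
Qed.

Lemma eq_on_level_same_coset (n : nat) (h k : AutT A) :
  (forall v, size v = n -> sval k v = sval h v) -> same_coset n h k.
Proof.
case: h => h [hb h0 hadj]; case: k => k [? k0 kadj] /= hk.
have [h' hK Kh] := hb.
have h'k_aut : is_aut (h' \o k).
  split=> [|/=|u v]; first by apply: bij_comp => //; exists h.
    by rewrite k0 -h0 hK.
  by rewrite kadj -{1}(Kh (k u)) -{1}(Kh (k v)) -hadj.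
exists (exist _ _ h'k_aut); split=> [v sv /=|v /=]; last by rewrite Kh.
by rewrite hk // hK.
Qed.

End Automorphisms.

Section ContinuousPlots.
Variables (R : realType) (A : finType).

(* [Defs.openT] is qualified because the analysis library has its own [openT]. *)
Definition cont_plot : plotpred R (Tpt R A) :=
  fun n U f => forall W, Defs.openT W -> open (U `&` f @^-1` W).

Lemma is_diffeology_cont_plot : is_diffeology cont_plot.
Proof.
split.
- move=> n U f g oU fg Uf W oW.
  suff -> : U `&` g @^-1` W = U `&` f @^-1` W by exact: Uf.
  by apply/seteqP; split=> x [Ux Wx]; split; rewrite //= ?fg // -fg.
- move=> n U c oU W oW; have [Wc|Wc] := pselect (W c).
    by rewrite (_ : _ `&` _ = U) //; apply/seteqP; split=> x //= [].
  by rewrite (_ : _ `&` _ = set0) //; apply/seteqP; split=> x //= [].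
- move=> n m U V f h oU oV Uf h_smooth hVU W oW.
  have h_cont : {in V, continuous h}.
    by move=> x; rewrite inE => Vx; have [] := h_smooth [::] x Vx.
  have := (continuous_inP h oV).1 h_cont _ (Uf W oW).
  congr open; apply/seteqP; split=> x [Vx Wx]; split=> //; first by case: Wx.
  by split=> //; apply: hVU; exists x.
- move=> n U f oU loc W oW; rewrite openE => x [Ux Wx].
  have [W' [oW' W'x W'U W'f]] := loc x Ux.
  have : nbhs x (W' `&` f @^-1` W).
    by apply: open_nbhs_nbhs; split => //; exact: W'f.
  by apply: filterS => y [W'y Wy]; split => //; exact: W'U.
Qed.

Lemma wire_gen_cont_plot n U f : @wire_gen R A n U f -> cont_plot U f.
Proof.
case=> gam [_ gam_cont _] W oW; rewrite setTI.
exact: (continuousP _).1 (@coord_continuous _ _ _ _ _) _ (gam_cont W oW).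
Qed.

Lemma DT_plot_cont_plot n U f : @DT_plot R A n U f -> cont_plot U f.
Proof.
by apply; [exact: is_diffeology_cont_plot|exact: wire_gen_cont_plot].
Qed.

Definition subtree (u : seq A) : set (Tpt R A) :=
  [set y | prefix u (sval y).1].

Lemma edge_pt_word (w : seq A) s (x : Tpt R A) : edge_pt w s x ->
  (sval x).1 = take (size w).-1 w \/ 0 < s /\ (sval x).1 = w.
Proof.
case=> [[_]|[s_gt0 ->]]; last by right.
by rewrite /vtx_pt; case: (take _ _) => [|a l] ->; left.
Qed.

Lemma open_subtree u : Defs.openT (subtree u).
Proof.
move=> w _ s _ x /edge_pt_word[xw|[s_gt0 xw]]; rewrite /subtree /= xw => ux.
- exists 1 => // s' _ _ x' /edge_pt_word[|[_]] ->//.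
  exact: prefix_trans ux (prefix_take _ _).
- exists s => // s' _ ss' x' [[s'0 _]|[_ -> //]].
  by move: ss'; rewrite s'0 sub0r normrN gtr0_norm // ltxx.
Qed.

End ContinuousPlots.

Lemma smooth_on_id (R : realType) m : smooth_on setT (@id 'rV[R]_m).
Proof.
have iderive_id vs : iderive vs (@id 'rV[R]_m) = id \/
                     exists c, iderive vs (@id 'rV[R]_m) = cst c.
  elim: vs => [|v vs [IH|[c IH]]]; [by left|right..].
  - by exists v; apply/funext => x /=; rewrite IH derive_id.
  - by exists 0; apply/funext => x /=; rewrite IH derive_cst.
move=> vs x _; case: (iderive_id vs) => [->|[c ->]]; split.
- exact: cvg_id.
- by move=> v; exact: (ex_derive (is_derive := is_derive_id x v)).
- exact: cst_continuous.
- by move=> v; exact: (ex_derive (is_derive := is_derive_cst c x v)).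
Qed.

Lemma connected_locally_constant (T : topologicalType) (X : Type) (f : T -> X) :
  connected [set: T] -> (forall t, open [set s | f s = f t]) ->
  forall a b, f a = f b.
Proof.
move=> T_conn f_loc a b; pose E := [set s | f s = f a].
have E_closed : closed E.
  rewrite -openC openE => t Et.
  apply: filterS (open_nbhs_nbhs (conj (f_loc t) erefl)).
  by move=> s /= fst Es; apply: Et; rewrite /E /= -fst.
have := T_conn E (ex_intro _ a erefl) (ex_intro2 _ _ E (f_loc a) (esym (setTI E)))
  (ex_intro2 _ _ E E_closed (esym (setTI E))).
by move=> ET; have : E b by rewrite ET.
Qed.

Section VertexOrbits.
Variables (R : realType) (A : finType) (P : R -> AutT A).
Hypothesis P_plot : Aut_plot (m := 1) setT (fun x : 'rV[R]_1 => P (x ord0 ord0)).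

Definition vertex (v : seq A) : Tpt R A.
Proof.
exists (v, if v is [::] then 0 else 1).
by case: v => [|c l]; [left|right; rewrite ltr01 lexx].
Defined.

Lemma open_vertex_orbit_subtree v u : open [set t | prefix u (sval (P t) v)].
Proof.
have cst_plot : @DT_plot R A 1 setT (fun=> vertex v).
  by move=> D D_diff _; exact: (diff_const D_diff _ openT).
have orbit_plot := P_plot openT (@smooth_on_id R 1) (fun _ _ => I) cst_plot.
have := DT_plot_cont_plot orbit_plot (@open_subtree R A u); rewrite setTI.
have mx11_cont : continuous (fun t : R => t *: const_mx 1 : 'rV[R]_1).
  by move=> t; apply: continuousZr_tmp; exact: cvg_id.
have mx11E t : (t *: const_mx 1 : 'rV[R]_1) ord0 ord0 = t by rewrite !mxE mulr1.
move=> /((continuousP _).1 mx11_cont).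
by congr open; apply/seteqP; split=> t; rewrite /subtree /= mx11E.
Qed.

Lemma vertex_orbit_const v a b : sval (P a) v = sval (P b) v.
Proof.
have size_P t : size (sval (P t) v) = size v by case: (P t) => g /= /size_aut.
apply: (connected_locally_constant (f := fun t => sval (P t) v)) => [|t].
  exact/connected_intervalP.
rewrite (_ : [set s | _] = [set s | prefix (sval (P t) v) (sval (P s) v)]).
  exact: open_vertex_orbit_subtree.
apply/seteqP; split=> s /=; first by move=> ->; exact: prefix_refl.
by rewrite prefixE size_P -(size_P s) take_size => /eqP.
Qed.

End VertexOrbits.

Theorem mainTheorem3 (R : realType) (A : finType) (hA : (1 < #|A|)%N)
  (P : R -> AutT A) :
  Aut_plot (m := 1) setT (fun x : 'rV[R]_1 => P (x ord0 ord0)) ->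
  forall m n : nat,
    same_coset n (P n%:R) (P n.+1%:R) /\
    same_coset m (P (- m%:R)) (P (- m.+1%:R)).
Proof.
move=> P_plot m n.
by split; apply: eq_on_level_same_coset => v _; exact: vertex_orbit_const.
Qed.
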